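(* Let $T$ be a finite rooted tree. For each vertex $v$ of $T$ let $n_v$ be the number of vertices of the subtree $T_v$ rooted at $v$, and let $v_1,\dots,v_{\deg(v)}$ be the children of $v$. Define $C_v(x)\in\mathbb{Z}[x]$ inductively by $C_v(x)=x+2$ if $v$ is a leaf, and $C_v(x)=x^{n_v}+2x\prod_{i=1}^{\deg(v)}C_{v_i}(x)+2$ if $v$ is an internal node. Then for every vertex $v$ of $T$, $C_v(x)$ is irreducible over $\mathbb{Q}$.
   Context: $T_v$ consists of $v$ and all its descendants; $\deg(v)$ denotes the number of children of $v$. *)

From HB Require Import structures.
From Stdlib Require Import List.
From mathcomp Require Import all_boot all_order all_algebra.
Set Implicit Arguments. Unset Strict Implicit. Unset Printing Implicit Defensive.
Import Order.TTheory GRing.Theory Num.Theory.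
Local Open Scope ring_scope.

Inductive tree : Type := Node of seq tree.

Definition children (t : tree) : seq tree := let: Node ts := t in ts.

Fixpoint nverts (t : tree) : nat :=
  let: Node ts := t in (sumn (map nverts ts)).+1.

Fixpoint Cpoly (t : tree) : {poly int} :=
  let: Node ts := t in
  match ts with
  | [::] => 'X + 2%:P
  | _ => 'X^(nverts t) + 2%:P * 'X * \prod_(p <- map Cpoly ts) p + 2%:P
  end.

(* is_vertex T v : v is (the subtree T_v rooted at) a vertex of T. *)
Inductive is_vertex : tree -> tree -> Prop :=
  | is_vertex_root t : is_vertex t t
  | is_vertex_child ts c v : In c ts -> is_vertex c v -> is_vertex (Node ts) v.

From Stdlib Require Import List.
From mathcomp Require Import all_boot all_algebra.
From mathcomp Require Import zify.
Import GRing.Theory Num.Theory.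
Local Open Scope ring_scope.

(* Every C_v has the shape x^(n_v) + 2 B_v(x) + 2 with deg B_v <= n_v and
   B_v(0) = 0, where B_v = x * prod_i C_(v_i) (and B_v = 0 for a leaf); the
   degree bound follows by induction on the tree since the n_(v_i) add up to
   n_v - 1.  Hence C_v is Eisenstein at 2: the coefficient of x^(n_v) is
   1 + 2 b, all lower coefficients are even, and the constant term is 2. *)

Lemma tree_ind_In (P : tree -> Prop) :
  (forall ts, (forall c, In c ts -> P c) -> P (Node ts)) -> forall t, P t.
Proof.
(* No [done] or [//] below: they could close a goal with an unguarded call
   to the fixpoint hypothesis. *)
move=> IH; fix tree_ind_In 1 => -[ts]; apply: IH.
elim: ts => [|c ts IHts] d [].
- move=> <-; exact: (tree_ind_In c).
- exact: IHts.
Qed.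

Lemma nverts_gt0 t : (0 < nverts t)%N.
Proof. by case: t. Qed.

Lemma size_prod_leq_In (R : nzSemiRingType) (I : Type) (s : seq I)
    (F : I -> {poly R}) (n : I -> nat) :
    (forall i, In i s -> (size (F i) <= (n i).+1)%N) ->
  (size (\prod_(i <- s) F i)%R <= (\sum_(i <- s) n i).+1)%N.
Proof.
elim: s => [|i s IHs] le_F; first by rewrite big_nil size_poly1.
rewrite !big_cons; apply: leq_trans (size_polyMleq _ _) _.
have := le_F i (or_introl erefl); have := IHs (fun j sj => le_F j (or_intror sj)).
lia.
Qed.

Lemma size_Xn_add_leq (R : nzSemiRingType) (n : nat) (a b : R) (B : {poly R}) :
  (size B <= n.+1)%N -> (size ('X^n + a%:P * B + b%:P)%R <= n.+1)%N.
Proof.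
move=> szB; rewrite mul_polyC; apply: leq_trans (size_polyD _ _) _.
rewrite geq_max (leq_trans (size_polyC_leq1 _)) // andbT.
apply: leq_trans (size_polyD _ _) _.
by rewrite geq_max size_polyXn leqnn (leq_trans (size_scale_leq _ _)).
Qed.

Lemma eisenstein_Xn_add (p n : nat) (B : {poly int}) :
    prime p -> (0 < n)%N -> (size B <= n.+1)%N -> B`_0 = 0 ->
  irreducible_poly ('X^n + p%:Z%:P * B + p%:Z%:P).
Proof.
move=> p_pr n_gt0 szB B0; set q := _ + _.
have coef_q i : q`_i = (i == n)%:R + p%:Z * B`_i + (if i == 0%N then p%:Z else 0).
  by rewrite !coefD coefXn coefCM coefC.
have Ndvd_qn : ~~ (p %| q`_n)%Z.
  rewrite coef_q eqxx (gtn_eqF n_gt0) addr0 rpredDr ?dvdz_mulr ?dvdzz //.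
  by rewrite dvdzE /= Euclid_dvd1.
have size_q : size q = n.+1.
  apply/anti_leq; rewrite size_Xn_add_leq //= ltnNge.
  by apply: contra Ndvd_qn => /leq_sizeP/(_ n (leqnn n))->.
apply: (eisenstein_crit p_pr).
- by rewrite size_q eqSS -lt0n.
- by rewrite lead_coefE size_q.
- rewrite coef_q B0 mulr0 (ltn_eqF n_gt0) !add0r /= dvdzE /= natrXE.
  by rewrite -[X in (_ %| X)%N]expn1 dvdn_Pexp2l // prime_gt1.
- move=> i; rewrite size_q /= => lt_in.
  rewrite coef_q (ltn_eqF lt_in) add0r; apply: rpredD; first exact/dvdz_mulr/dvdzz.
  by case: ifP; rewrite ?dvdzz ?dvdz0.
Qed.

Definition Cbody (t : tree) : {poly int} :=
  if children t is [::] then 0 else 'X * \prod_(p <- map Cpoly (children t)) p.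

Lemma CpolyE t : Cpoly t = 'X^(nverts t) + 2%:P * Cbody t + 2%:P.
Proof. by case: t => -[|c ts] /=; rewrite ?mulr0 ?addr0 ?expr1 ?mulrA. Qed.

Lemma coef0_Cbody t : (Cbody t)`_0 = 0.
Proof. by case: t => -[|c ts]; rewrite /Cbody /= ?coef0 ?coefXM. Qed.

Lemma size_Cbody_leq t :
    (forall c, In c (children t) -> (size (Cpoly c) <= (nverts c).+1)%N) ->
  (size (Cbody t) <= (nverts t).+1)%N.
Proof.
case: t => -[|c ts] le_children; first by rewrite size_poly0.
have -> : Cbody (Node (c :: ts)) = 'X * \prod_(d <- c :: ts) Cpoly d.
  by rewrite /Cbody big_map.
change (nverts _) with (sumn (map nverts (c :: ts))).+1.
rewrite sumnE big_map; apply: leq_trans (size_polyMleq _ _) _.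
by rewrite size_polyX /= ltnS; apply: size_prod_leq_In.
Qed.

Lemma size_Cpoly_leq t : (size (Cpoly t) <= (nverts t).+1)%N.
Proof.
elim/tree_ind_In: t => ts IH.
by rewrite CpolyE size_Xn_add_leq // size_Cbody_leq.
Qed.

Theorem mainTheorem2 (T : tree) :
  forall v : tree, is_vertex T v ->
    irreducible_poly (map_poly (intr : int -> rat) (Cpoly v)).
Proof.
move=> v _; apply/irreducible_rat_int; rewrite CpolyE.
apply: (eisenstein_Xn_add 2) => //.
- exact: nverts_gt0.
- by apply: size_Cbody_leq => c _; apply: size_Cpoly_leq.
- exact: coef0_Cbody.
Qed.
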